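(* Every prime reciprocal Puiseux monoid satisfies the ascending chain condition on principal ideals (ACCP).
   Context: A Puiseux monoid is an additive submonoid of $(\mathbb{Q}_{\ge 0},+)$. For $q\in\mathbb{Q}_{>0}$, $\mathsf{d}(q)$ denotes the denominator of $q$ in lowest terms. A Puiseux monoid $M$ is prime reciprocal if there exist an infinite set $P$ of prime numbers and a set $S\subseteq\mathbb{Q}_{>0}$ whose elements have pairwise distinct denominators such that $M$ is generated by $S$ as a monoid and $\{\mathsf{d}(s)\mid s\in S\}=P$. A principal ideal of a (commutative, cancellative) monoid $M$ is a set $x+M$ with $x\in M$; $M$ satisfies ACCP if every ascending chain $x_1+M\subseteq x_2+M\subseteq\cdots$ of principal ideals eventually stabilizes. *)

From HB Require Import structures.
From mathcomp Require Import all_boot all_order all_algebra.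
Set Implicit Arguments. Unset Strict Implicit. Unset Printing Implicit Defensive.
Import Order.TTheory GRing.Theory Num.Theory.
Local Open Scope ring_scope.

Definition puiseux_monoid (M : rat -> Prop) : Prop :=
  [/\ M 0, (forall x y, M x -> M y -> M (x + y)) & (forall x, M x -> 0 <= x)].

Definition dnm (q : rat) : nat := absz (denq q).

Definition generated_by (M S : rat -> Prop) : Prop :=
  forall x, M x <-> exists s : seq rat,
      (forall a, a \in s -> S a) /\ x = \sum_(a <- s) a.

Definition prime_reciprocal (M : rat -> Prop) : Prop :=
  exists (P : nat -> Prop) (S : rat -> Prop),
    (forall p, P p -> prime p) /\
    (forall n : nat, exists p, (n < p)%N /\ P p) /\            (* P infinite *)
    (forall s, S s -> 0 < s) /\
    (forall s t, S s -> S t -> dnm s = dnm t -> s = t) /\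
    generated_by M S /\
    (forall p, P p <-> exists2 s, S s & dnm s = p).

Definition pideal (M : rat -> Prop) (x : rat) : rat -> Prop :=
  fun y => exists2 m, M m & y = x + m.

Definition ACCP (M : rat -> Prop) : Prop :=
  forall x : nat -> rat,
    (forall n, M (x n)) ->
    (forall n y, pideal M (x n) y -> pideal M (x n.+1) y) ->
    exists N, forall n, (N <= n)%N -> forall y, pideal M (x n) y <-> pideal M (x N) y.

From mathcomp Require Import all_boot all_order all_algebra ring lra.
From mathcomp Require Import boolp.
Import GRing.Theory Num.Theory Order.TTheory.
Set Implicit Arguments. Unset Strict Implicit. Unset Printing Implicit Defensive.
Local Open Scope ring_scope.

(* Every generator a has prime denominator p_a = d(a).  If x is a finite sum
   of generators, the multiplicity c_a of each a taken mod p_a depends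
   only on x: the difference of two multiplicities times a has denominator
   prime to p_a, while a itself has denominator p_a.  Hence
   x = n(x) + sum_a r_a a with 0 <= r_a < p_a and n(x) a natural number,
   uniquely.  For x = y + z in M the digits add with carries, so
   n(x) = n(y) + n(z) + (carries); when n(x) = n(y) the cofactor z has no
   integer part and no carries occur, so the digit sum of x is that of y
   plus that of z.  Along an ascending chain of principal ideals the pair
   (integer part, digit sum) of the generators therefore decreases
   lexicographically and eventually stabilizes, which forces the cofactors
   to vanish. *)

Lemma ratE_dnm (q : rat) : q = (numq q)%:~R / (dnm q)%:R.
Proof. by rewrite -[LHS]divq_num_den -(gtz0_abs (denq_gt0 q)). Qed.

Definition p_integral (p : nat) (x : rat) :=
  exists (u : int) (v : nat), ~~ (p %| v)%N /\ x = u%:~R / v%:R.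

Section PIntegral.

Variable p : nat.
Hypothesis p_prime : prime p.

Lemma natr_neq0_ndvd (v : nat) : ~~ (p %| v)%N -> (v%:R : rat) != 0.
Proof. by apply: contraNneq => /eqP; rewrite pnatr_eq0 => /eqP ->; rewrite dvdn0. Qed.

Lemma p_integral0 : p_integral p 0.
Proof. by exists 0, 1%N; rewrite mul0r dvdn1 eq_sym neq_ltn prime_gt1. Qed.

Lemma p_integralD x y : p_integral p x -> p_integral p y -> p_integral p (x + y).
Proof.
move=> [u1 [v1 [pv1 ->]]] [u2 [v2 [pv2 ->]]].
exists (u1 * v2%:Z + u2 * v1%:Z), (v1 * v2)%N.
split; first by rewrite Euclid_dvdM // negb_or pv1 pv2.
rewrite natrM intrD !intrM !pmulrn /=.
by field; rewrite !natr_neq0_ndvd.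
Qed.

Lemma p_integralN x : p_integral p x -> p_integral p (- x).
Proof. by move=> [u [v [pv ->]]]; exists (- u), v; rewrite intrN mulNr. Qed.

Lemma p_integral_sum (I : eqType) (r : seq I) (P : pred I) (F : I -> rat) :
  (forall i, i \in r -> P i -> p_integral p (F i)) ->
  p_integral p (\sum_(i <- r | P i) F i).
Proof.
move=> intF; rewrite big_seq_cond; apply: big_ind => //.
- exact: p_integral0.
- exact: p_integralD.
- by move=> i /andP[]; apply: intF.
Qed.

Lemma p_integral_dnm_neq a : prime (dnm a) -> dnm a != p -> p_integral p a.
Proof.
move=> a_prime ne; exists (numq a), (dnm a).
by rewrite dvdn_prime2 // eq_sym ne -ratE_dnm.
Qed.

Lemma dvdn_p_integral_mul a k :
  dnm a = p -> p_integral p (k%:R * a) -> (p %| k)%N.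
Proof.
move=> da [u [v [pv E]]].
have p_numq : ~~ (p %| `|numq a|)%N.
  by rewrite -prime_coprime // coprime_sym -da; exact: coprime_num_den.
have kav : (k%:Z * numq a * v%:Z) = u * p%:Z.
  apply: (@intr_inj rat); rewrite !intrM -!pmulrn.
  have p_neq0 : (p%:R : rat) != 0 by rewrite pnatr_eq0 -lt0n prime_gt0.
  have -> : (u%:~R * p%:R : rat) = u%:~R / v%:R * v%:R * p%:R.
    by field; rewrite natr_neq0_ndvd.
  by rewrite -E {2}[a]ratE_dnm da; field.
have : (p %| `|(k%:Z * numq a * v%:Z)%R|)%N by rewrite kav abszM dvdn_mull.
by rewrite !abszM !Euclid_dvdM // (negbTE pv) (negbTE p_numq) !orbF.
Qed.

End PIntegral.

Section CountMem.

Variables (V : nmodType) (I : eqType) (F : I -> V).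

Lemma sum_count_mem (U s : seq I) : uniq U -> {subset s <= U} ->
  \sum_(i <- s) F i = \sum_(i <- U) F i *+ count_mem i s.
Proof.
move=> uU; elim: s => [|b s IH] sU /=.
  by rewrite big_nil big1 // => i _; rewrite mulr0n.
have bU : b \in U by apply: sU; rewrite mem_head.
rewrite big_cons IH => [|i si]; last by apply: sU; rewrite inE si orbT.
under [RHS]eq_bigr => i _ do rewrite /= mulrnDr.
rewrite big_split /=; congr (_ + _).
by rewrite (bigD1_seq b) //= eqxx big1 ?addr0 // => i; rewrite eq_sym => /negPf ->.
Qed.

Lemma sum_split_count_mem (s : seq I) a :
  \sum_(i <- s) F i = F a *+ count_mem a s + \sum_(i <- s | i != a) F i.
Proof.
elim: s => [|b s IH]; first by rewrite !big_nil add0r.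
rewrite !big_cons IH /= eq_sym; case: eqVneq => [->|_] /=.
  by rewrite mulrS addrA.
by rewrite add0n addrCA.
Qed.

End CountMem.

Lemma big_undup_count_mem (R : Type) (idx : R) (op : Monoid.com_law idx)
    (I : eqType) (G : I -> nat -> R) (U s : seq I) :
  uniq U -> {subset s <= U} -> (forall i, G i 0%N = idx) ->
  \big[op/idx]_(i <- undup s) G i (count_mem i s) =
  \big[op/idx]_(i <- U) G i (count_mem i s).
Proof.
move=> uU sU G0; rewrite [RHS](bigID (mem s)) /= [X in op _ X]big1; last first.
  by move=> i /count_memPn ->.
rewrite Monoid.mulm1 -[RHS]big_filter; apply: perm_big.
apply: uniq_perm; [exact: undup_uniq | exact: filter_uniq |] => i.
by rewrite mem_undup mem_filter; case: (boolP (i \in s)) => // /sU ->.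
Qed.

(* A list s of generators is read as the multiplicities c_a = count_mem a s.
   Since d(a) * a = numq a, the quotient of c_a by d(a) contributes
   (c_a / d(a)) * numq a to the integer part. *)
Definition digit (s : seq rat) (a : rat) : nat := (count_mem a s %% dnm a)%N.

Definition frac_part (s : seq rat) : rat := \sum_(a <- undup s) (digit s a)%:R * a.

Definition digit_sum (s : seq rat) : nat := (\sum_(a <- undup s) digit s a)%N.

Definition int_part (s : seq rat) : nat :=
  (\sum_(a <- undup s) count_mem a s %/ dnm a * `|numq a|)%N.

Lemma frac_partE (U s : seq rat) : uniq U -> {subset s <= U} ->
  frac_part s = \sum_(a <- U) (digit s a)%:R * a.
Proof.
move=> uU sU; rewrite /frac_part.
rewrite (@big_undup_count_mem _ _ _ _ (fun a n => (n %% dnm a)%N%:R * a) _ _ uU sU) //.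
by move=> a; rewrite mod0n mul0r.
Qed.

Lemma digit_sumE (U s : seq rat) : uniq U -> {subset s <= U} ->
  digit_sum s = (\sum_(a <- U) digit s a)%N.
Proof.
move=> uU sU; rewrite /digit_sum.
rewrite (@big_undup_count_mem _ _ _ _ (fun a n => n %% dnm a)%N _ _ uU sU) //.
by move=> a; rewrite mod0n.
Qed.

Lemma dnm_mul_pos (a : rat) : 0 < a -> (dnm a)%:R * a = `|numq a|%:R.
Proof.
move=> a_pos; rewrite {2}[a]ratE_dnm mulrC divfK; last first.
  by rewrite pnatr_eq0 /dnm absz_eq0 denq_neq0.
have numq_ge0 : 0 <= numq a by rewrite ltW // numq_gt0.
by rewrite -[in LHS](gez0_abs numq_ge0).
Qed.

Section PositiveSeq.

Variable s : seq rat.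
Hypothesis s_pos : forall a, a \in s -> 0 < a.

Lemma sum_int_frac_part : \sum_(a <- s) a = (int_part s)%:R + frac_part s.
Proof.
rewrite (sum_count_mem _ (undup_uniq s)) => [|a]; last by rewrite mem_undup.
rewrite /int_part /frac_part natr_sum -big_split /=.
apply: eq_big_seq => a; rewrite mem_undup => /s_pos a_pos.
rewrite -[LHS]mulr_natl {1}(divn_eq (count_mem a s) (dnm a)) natrD mulrDl natrM.
by rewrite -mulrA dnm_mul_pos // -natrM.
Qed.

Lemma sum_eq0_of_parts_eq0 :
  int_part s = 0%N -> digit_sum s = 0%N -> \sum_(a <- s) a = 0.
Proof.
move=> int0 /eqP; rewrite sum_nat_seq_eq0 => /allP digit0.
rewrite sum_int_frac_part int0 add0r /frac_part big_seq big1 // => a /digit0 /eqP ->.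
by rewrite mul0r.
Qed.

End PositiveSeq.

Section PrimeReciprocalRepresentations.

Variable S : rat -> Prop.
Hypothesis S_pos : forall a, S a -> 0 < a.
Hypothesis S_dnm_prime : forall a, S a -> prime (dnm a).
Hypothesis S_dnm_inj : forall a b, S a -> S b -> dnm a = dnm b -> a = b.

Lemma p_integral_sum_other (r : seq rat) a : {in r, forall b, S b} -> S a ->
  p_integral (dnm a) (\sum_(b <- r | b != a) b).
Proof.
move=> r_S Sa; apply: p_integral_sum => [|b br b_neq_a]; first exact: S_dnm_prime.
apply: (p_integral_dnm_neq (S_dnm_prime Sa)); first exact: S_dnm_prime (r_S b br).
by apply: contra b_neq_a => /eqP/(S_dnm_inj (r_S b br) Sa) ->.
Qed.

Lemma digit_eq_of_sum_eq (s t : seq rat) a :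
  {in s, forall b, S b} -> {in t, forall b, S b} -> S a ->
  \sum_(b <- s) b = \sum_(b <- t) b -> digit s a = digit t a.
Proof.
wlog le_ts : s t / (count_mem a t <= count_mem a s)%N.
  move=> wlog_le s_S t_S Sa st.
  have [le_ts|/ltnW le_st] := leqP (count_mem a t) (count_mem a s).
    exact: wlog_le.
  by symmetry; apply: wlog_le.
move=> s_S t_S Sa st; apply/eqP; rewrite /digit eqn_mod_dvd //.
apply: (dvdn_p_integral_mul (S_dnm_prime Sa) (erefl _)).
have -> : (count_mem a s - count_mem a t)%:R * a =
    \sum_(b <- t | b != a) b - \sum_(b <- s | b != a) b.
  move: st; rewrite (sum_split_count_mem idfun s a) (sum_split_count_mem idfun t a).
  rewrite natrB // mulrBl !mulr_natl /=; lra.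
apply: (p_integralD (S_dnm_prime Sa)); first exact: p_integral_sum_other.
exact/p_integralN/p_integral_sum_other.
Qed.

Section Splitting.

Variables s t u : seq rat.
Hypotheses (s_S : {in s, forall b, S b}) (t_S : {in t, forall b, S b})
  (u_S : {in u, forall b, S b}).
Hypothesis s_split : \sum_(b <- s) b = \sum_(b <- t) b + \sum_(b <- u) b.

Let U := undup (s ++ t ++ u).
Let carry a := ((digit t a + digit u a) %/ dnm a)%N.
Let carry_sum := (\sum_(a <- U) carry a * `|numq a|)%N.

Let U_uniq : uniq U. Proof. exact: undup_uniq. Qed.
Let s_sub : {subset s <= U}. Proof. by move=> b bs; rewrite mem_undup mem_cat bs. Qed.
Let t_sub : {subset t <= U}.
Proof. by move=> b bt; rewrite mem_undup !mem_cat bt orbT. Qed.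
Let u_sub : {subset u <= U}.
Proof. by move=> b bu; rewrite mem_undup !mem_cat bu !orbT. Qed.
Let U_S : {in U, forall b, S b}.
Proof. by move=> b; rewrite mem_undup !mem_cat => /or3P[/s_S|/t_S|/u_S]. Qed.

Lemma digit_split a : a \in U -> digit s a = ((digit t a + digit u a) %% dnm a)%N.
Proof.
move=> aU; rewrite /digit modnDm -count_cat.
apply: digit_eq_of_sum_eq; [exact: s_S | | exact: U_S | by rewrite big_cat].
by move=> b; rewrite mem_cat => /orP[/t_S|/u_S].
Qed.

Lemma frac_part_split :
  frac_part t + frac_part u = frac_part s + carry_sum%:R.
Proof.
rewrite (frac_partE U_uniq t_sub) (frac_partE U_uniq u_sub) (frac_partE U_uniq s_sub).
rewrite natr_sum -!big_split /=; apply: eq_big_seq => a aU.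
rewrite digit_split // -mulrDl -natrD {1}(divn_eq (digit t a + digit u a) (dnm a)).
have a_pos := S_pos (U_S aU).
by rewrite natrD mulrDl addrC natrM -mulrA dnm_mul_pos // natrM.
Qed.

Lemma int_part_split : int_part s = (int_part t + int_part u + carry_sum)%N.
Proof.
have pos r : {in r, forall b, S b} -> forall b, b \in r -> 0 < b.
  by move=> r_S b /r_S /S_pos.
apply/eqP; rewrite -(eqr_nat rat) !natrD; apply/eqP.
move: s_split (frac_part_split).
rewrite !sum_int_frac_part; [lra | exact: pos ..].
Qed.

Lemma int_part_split_le : (int_part t + int_part u <= int_part s)%N.
Proof. by rewrite int_part_split leq_addr. Qed.

Lemma digit_sum_split : int_part s = int_part t ->
  int_part u = 0%N /\ digit_sum s = (digit_sum t + digit_sum u)%N.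
Proof.
rewrite int_part_split -addnA -{2}[int_part t]addn0 => /eqP; rewrite eqn_add2l.
rewrite addn_eq0 => /andP[/eqP int_u0 /eqP carry_sum0]; split => //.
rewrite (digit_sumE U_uniq s_sub) (digit_sumE U_uniq t_sub) (digit_sumE U_uniq u_sub).
rewrite -big_split /=; apply: eq_big_seq => a aU.
have : (carry a * `|numq a| == 0)%N.
  by move/eqP: carry_sum0; rewrite sum_nat_seq_eq0 => /allP /(_ a aU).
rewrite muln_eq0 absz_eq0 numq_eq0 (gt_eqF (S_pos (U_S aU))) orbF => /eqP no_carry.
have {}no_carry : ((digit t a + digit u a) %/ dnm a = 0)%N by [].
by rewrite digit_split // [RHS](divn_eq _ (dnm a)) no_carry.
Qed.

Lemma sum_eq0_of_parts_stable : int_part s = int_part t ->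
  digit_sum s = digit_sum t -> \sum_(b <- u) b = 0.
Proof.
move=> int_eq digits_eq; have [int_u0 digits_split] := digit_sum_split int_eq.
apply: sum_eq0_of_parts_eq0 => [b /u_S /S_pos //|//|].
apply/eqP; rewrite -(eqn_add2l (digit_sum t)) addn0 -digits_split.
by rewrite digits_eq.
Qed.

End Splitting.

End PrimeReciprocalRepresentations.

Lemma nonincreasing_eventually_constant (f : nat -> nat) :
  (forall n, (f n.+1 <= f n)%N) -> exists N, forall n, (N <= n)%N -> f n = f N.
Proof.
move=> f_dec.
have f_homo : {homo f : m n / (m <= n)%N >-> (n <= m)%N}.
  by apply: homo_leq => // m n k mn nk; apply: leq_trans nk mn.
have f_val : exists m, `[< exists n, f n = m >] by exists (f 0%N); apply/asboolP; exists 0%N.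
case: (ex_minnP f_val) => _ /asboolP[N <-] f_min.
exists N => n le_Nn; apply/eqP; rewrite eqn_leq f_homo // f_min //.
by apply/asboolP; exists n.
Qed.

Lemma lex_nonincreasing_eventually_constant (f g : nat -> nat) :
  (forall n, (f n.+1 <= f n)%N) -> (forall n, f n.+1 = f n -> (g n.+1 <= g n)%N) ->
  exists N, forall n, (N <= n)%N -> f n = f N /\ g n = g N.
Proof.
move=> f_dec g_dec; have [N f_const] := nonincreasing_eventually_constant f_dec.
have [K g_const] : exists K, forall k, (K <= k)%N -> g (N + k)%N = g (N + K)%N.
  apply: (nonincreasing_eventually_constant (f := fun k => g (N + k)%N)) => k.
  by rewrite addnS g_dec // -addnS !f_const ?leq_addr.
exists (N + K)%N => n le_NKn; rewrite -(subnKC (leq_trans (leq_addr K N) le_NKn)).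
split; first by rewrite !f_const ?leq_addr.
by rewrite g_const // -(leq_add2l N) subnKC // (leq_trans (leq_addr K N) le_NKn).
Qed.

Theorem mainTheorem5 (M : rat -> Prop) :
  puiseux_monoid M -> prime_reciprocal M -> ACCP M.
Proof.
move=> [M0 _ _] [P [S [P_prime [_ [S_pos [S_inj [M_gen P_dnm]]]]]]] x Mx chain.
have S_prime a : S a -> prime (dnm a) by move=> Sa; apply/P_prime/P_dnm; exists a.
have [rep rep_spec] := choice (fun n => (M_gen (x n)).1 (Mx n)).
have cof_ex n : exists u : seq rat,
    {in u, forall b, S b} /\ x n = x n.+1 + \sum_(b <- u) b.
  have [|m Mm ->] := chain n (x n); first by exists 0; rewrite ?addr0.
  by have [r [r_S ->]] := (M_gen m).1 Mm; exists r.
have [cof cof_spec] := choice cof_ex.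
have rep_split n : \sum_(b <- rep n) b = \sum_(b <- rep n.+1) b + \sum_(b <- cof n) b.
  by rewrite -(rep_spec n).2 -(rep_spec n.+1).2 -(cof_spec n).2.
have step_le n := int_part_split_le S_pos S_prime S_inj
  (rep_spec n).1 (rep_spec n.+1).1 (cof_spec n).1 (rep_split n).
have digits_le n : int_part (rep n.+1) = int_part (rep n) ->
    (digit_sum (rep n.+1) <= digit_sum (rep n))%N.
  move=> /esym; move/(digit_sum_split S_pos S_prime S_inj
    (rep_spec n).1 (rep_spec n.+1).1 (cof_spec n).1 (rep_split n)) => [[_ ->]].
  by rewrite leq_addr.
have [N rep_const] := lex_nonincreasing_eventually_constant
  (fun n => leq_trans (leq_addr _ _) (step_le n)) digits_le.
have x_stable n : (N <= n)%N -> x n.+1 = x n.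
  move=> le_Nn; have [int_n digits_n] := rep_const n le_Nn.
  have [int_Sn digits_Sn] := rep_const n.+1 (leqW le_Nn).
  rewrite [RHS](cof_spec n).2 (sum_eq0_of_parts_stable S_pos S_prime S_inj
    (rep_spec n).1 (rep_spec n.+1).1 (cof_spec n).1 (rep_split n)) ?addr0 //.
  - by rewrite int_n int_Sn.
  - by rewrite digits_n digits_Sn.
exists N => n le_Nn y; suff -> : x n = x N by [].
rewrite -(subnKC le_Nn); elim: (n - N)%N => [|k IH]; first by rewrite addn0.
by rewrite addnS x_stable ?leq_addr.
Qed.
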